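(* Let $k$ be a positive integer, let $\Gamma$ be a $k$-free group in which the centralizer of every nontrivial element is infinite cyclic, and let $(L,(C_v)_{v\in L^{(0)}})$ be a $\Gamma$-labeled complex. Fix an integer $r$ with $0<r\le k-1$. Let $W\subset|L|$ be a saturated, connected subset such that every simplex contained in $W$ has internal rank exactly $r$. Then the local rank of $\Theta(W)$ is at most $r$.
   Context: A group is $k$-free if every subgroup of rank at most $k$ is free (rank = minimal number of generators). A $\Gamma$-labeled complex is a simplicial complex $L$ (geometric, consisting of open simplices, not necessarily locally finite, with $|L|$ the union of its simplices in the weak topology) together with an assignment to each vertex $v$ of a maximal cyclic subgroup $C_v$ of $\Gamma$. A subset $W\subset|L|$ is saturated if it is a union of open simplices of $L$. For a simplex $\sigma$, $\Theta(\sigma)=\langle C_v: v\text{ a vertex of }\sigma\rangle$, and the internal rank is $\mathrm{IR}(\sigma)=\max\{\operatorname{rank}\Theta(\tau):\tau\text{ a face of }\sigma\text{ (including }\sigma)\}$. For saturated $W$, $\Theta(W)$ is the subgroup generated by all $C_v$ with $v$ a vertex of a simplex contained in $W$. A group $G$ has local rank $\le k$ if every finitely generated subgroup of $G$ is contained in a subgroup of $G$ of rank $\le k$; the local rank is the least such $k$ (or $\infty$). *)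

From Stdlib Require Import List ZArith Relations.
Import ListNotations.
Set Implicit Arguments.

Record group := Group {
  carrier :> Type;
  gmul : carrier -> carrier -> carrier;
  gone : carrier;
  ginv : carrier -> carrier;
  gmulA : forall x y z, gmul x (gmul y z) = gmul (gmul x y) z;
  gmul1l : forall x, gmul gone x = x;
  gmul1r : forall x, gmul x gone = x;
  gmulVl : forall x, gmul (ginv x) x = gone;
  gmulVr : forall x, gmul x (ginv x) = gone
}.

Section GroupDefs.
Variable G : group.

Definition subset (A B : G -> Prop) : Prop := forall x, A x -> B x.

Definition is_subgroup (H : G -> Prop) : Prop :=
  H (gone G) /\ (forall x y, H x -> H y -> H (gmul G x y)) /\
  (forall x, H x -> H (ginv G x)).

Definition gen (S : G -> Prop) : G -> Prop :=
  fun x => forall H, is_subgroup H -> subset S H -> H x.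

Definition gen_list (l : list G) : G -> Prop := gen (fun y => In y l).

Definition rank_le (H : G -> Prop) (n : nat) : Prop :=
  exists l : list G, length l <= n /\ forall x, H x <-> gen_list l x.

Definition rank_eq (H : G -> Prop) (n : nat) : Prop :=
  rank_le H n /\ forall m, m < n -> ~ rank_le H m.

Definition fin_gen (H : G -> Prop) : Prop := exists n, rank_le H n.

Fixpoint gpow (x : G) (n : nat) : G :=
  match n with O => gone G | S m => gmul G x (gpow x m) end.

Definition zpow (x : G) (z : Z) : G :=
  match z with
  | Z0 => gone G
  | Zpos p => gpow x (Pos.to_nat p)
  | Zneg p => ginv G (gpow x (Pos.to_nat p))
  end.

Definition is_cyclic (H : G -> Prop) : Prop :=
  exists c, forall x, H x <-> exists z : Z, x = zpow c z.

Definition is_infinite_cyclic (H : G -> Prop) : Prop :=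
  exists c, (forall x, H x <-> exists z : Z, x = zpow c z) /\
            (forall z : Z, zpow c z = gone G -> z = 0%Z).

Definition maximal_cyclic (C : G -> Prop) : Prop :=
  is_cyclic C /\ forall D, is_cyclic D -> subset C D -> subset D C.

Definition centralizer (g : G) : G -> Prop := fun x => gmul G x g = gmul G g x.

Fixpoint eval_word (w : list (G * bool)) : G :=
  match w with
  | [] => gone G
  | (b, s) :: w' => gmul G (if s then b else ginv G b) (eval_word w')
  end.

Fixpoint reduced (w : list (G * bool)) : Prop :=
  match w with
  | [] => True
  | (b, s) :: w' =>
      match w' with
      | [] => True
      | (b', s') :: _ => ~ (b = b' /\ s <> s')
      end /\ reduced w'
  end.

Definition free_basis (H B : G -> Prop) : Prop :=
  (forall x, H x <-> gen B x) /\
  forall w : list (G * bool), w <> [] -> Forall (fun p => B (fst p)) w ->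
    reduced w -> eval_word w <> gone G.

Definition is_free (H : G -> Prop) : Prop := exists B, free_basis H B.

Definition k_free (k : nat) : Prop :=
  forall H, rank_le H k -> is_free H.

Definition local_rank_le (H : G -> Prop) (n : nat) : Prop :=
  forall F, fin_gen F -> subset F H ->
    exists K, rank_le K n /\ subset K H /\ subset F K.

End GroupDefs.

Arguments subset {G}. Arguments is_subgroup {G}. Arguments gen {G}.
Arguments gen_list {G}. Arguments rank_le {G}. Arguments rank_eq {G}.
Arguments fin_gen {G}. Arguments gpow {G}. Arguments zpow {G}.
Arguments is_cyclic {G}. Arguments is_infinite_cyclic {G}.
Arguments maximal_cyclic {G}. Arguments centralizer {G}.
Arguments eval_word {G}. Arguments reduced {G}. Arguments free_basis {G}.
Arguments is_free {G}. Arguments local_rank_le {G}.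

Record complex := Complex {
  vert : Type;
  simp : (vert -> Prop) -> Prop;
  simp_fin : forall s, simp s -> exists l : list vert, forall v, s v <-> In v l;
  simp_ne : forall s, simp s -> exists v, s v;
  simp_face : forall s t, simp s -> (exists v, t v) -> (forall v, t v -> s v) -> simp t;
  simp_vert : forall v, simp (fun w => w = v)
}.

Definition same_simplex {L : complex} (s t : vert L -> Prop) : Prop :=
  forall v, s v <-> t v.

Definition face {L : complex} (t s : vert L -> Prop) : Prop :=
  (exists v, t v) /\ forall v, t v -> s v.

(* A saturated subset W of |L| is represented by the set of (open) simplices
   it consists of. *)
Definition saturated {L : complex} (W : (vert L -> Prop) -> Prop) : Prop :=
  (forall s, W s -> simp L s) /\
  (forall s t, W s -> same_simplex s t -> W t).

(* Connectedness of a saturated set: two open simplices of W are adjacent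
   when one is a face of the other; W is connected iff this adjacency graph
   is connected (equivalent to topological connectedness in the weak topology). *)
Definition sat_adj {L : complex} (W : (vert L -> Prop) -> Prop) (s t : vert L -> Prop) : Prop :=
  W s /\ W t /\ (face s t \/ face t s).

Definition sat_connected {L : complex} (W : (vert L -> Prop) -> Prop) : Prop :=
  forall s t, W s -> W t -> clos_refl_trans _ (sat_adj W) s t.

Definition labeling {G : group} {L : complex} (C : vert L -> G -> Prop) : Prop :=
  forall v, maximal_cyclic (C v).

Definition Theta_simplex {G : group} {L : complex} (C : vert L -> G -> Prop)
  (s : vert L -> Prop) : G -> Prop :=
  gen (fun x => exists v, s v /\ C v x).

Definition IR_eq {G : group} {L : complex} (C : vert L -> G -> Prop)
  (s : vert L -> Prop) (r : nat) : Prop :=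
  (forall t, face t s -> rank_le (Theta_simplex C t) r) /\
  (exists t, face t s /\ rank_eq (Theta_simplex C t) r).

Definition Theta_sat {G : group} {L : complex} (C : vert L -> G -> Prop)
  (W : (vert L -> Prop) -> Prop) : G -> Prop :=
  gen (fun x => exists s v, W s /\ s v /\ C v x).

(* Walk through W along adjacent simplices, keeping a subgroup A = <gl> of Θ(W)
   generated by at most r elements that contains Θ of every simplex visited.  On
   entering a simplex τ, some face ρ of the previous simplex has Θ(ρ) of rank
   exactly r and lies in A; for a vertex v of τ with C_v = <c>, the face ρ ∪ {v}
   of τ gives rank <Θ(ρ), c> <= r.  If <A, c> needed r + 1 <= k generators it
   would be free, and by the Hopf property free on c and the generators of A;
   then <Θ(ρ), c> would be the free product Θ(ρ) * <c>, of rank r + 1.  So the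
   vertices of τ can be absorbed one at a time.  A finitely generated subgroup of
   Θ(W) involves finitely many simplices, all reachable by such walks.
   The Hopf property is proved by counting homomorphisms into finite symmetric
   groups, in which every reduced word acts nontrivially. *)

From Pilot Require Import Defs.
From Stdlib Require Import List Relations Classical ClassicalEpsilon Lia ZArith.
From mathcomp Require all_boot all_fingroup zify.
Import ListNotations.

Section GroupLaws.
Context {T : group}.

Lemma mul_cancel_l (x y z : T) : gmul T x y = gmul T x z -> y = z.
Proof.
  intros E. rewrite <- (gmul1l T y), <- (gmul1l T z), <- (gmulVl T x), <- !gmulA, E.
  reflexivity.
Qed.

Lemma inv_uniq (x y : T) : gmul T x y = gone T -> y = ginv T x.
Proof. intros E. apply (mul_cancel_l x). rewrite E, gmulVr. reflexivity. Qed.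

Lemma inv_mul (x y : T) : ginv T (gmul T x y) = gmul T (ginv T y) (ginv T x).
Proof.
  symmetry. apply inv_uniq.
  rewrite <- gmulA, (gmulA T y), gmulVr, gmul1l, gmulVr. reflexivity.
Qed.

Lemma inv_inv (x : T) : ginv T (ginv T x) = x.
Proof. symmetry. apply inv_uniq, gmulVl. Qed.

Lemma inv_one : ginv T (gone T) = gone T.
Proof. symmetry. apply inv_uniq, gmul1l. Qed.

End GroupLaws.

Definition letter {T : group} (x : T) (s : bool) : T := if s then x else ginv T x.

Section Words.
Context {A : Type}.

Fixpoint wreduced (w : list (A * bool)) : Prop :=
  match w with
  | [] => True
  | (a, s) :: w' =>
      match w' with
      | [] => True
      | (a', s') :: _ => ~ (a = a' /\ s <> s')
      end /\ wreduced w'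
  end.

Definition wover (D : A -> Prop) (w : list (A * bool)) : Prop :=
  forall p, In p w -> D (fst p).

Definition winv (w : list (A * bool)) : list (A * bool) :=
  rev (map (fun p => (fst p, negb (snd p))) w).

Lemma wover_app D w1 w2 : wover D (w1 ++ w2) <-> wover D w1 /\ wover D w2.
Proof.
  unfold wover. split.
  - intros H. split; intros p Hp; apply H, in_or_app; auto.
  - intros [H1 H2] p Hp. apply in_app_or in Hp. destruct Hp; auto.
Qed.

Lemma wover_winv D w : wover D w -> wover D (winv w).
Proof.
  intros H p Hp. apply in_rev, in_map_iff in Hp. destruct Hp as [q [<- Hq]]. exact (H q Hq).
Qed.

Lemma wover_cons D p w : wover D (p :: w) <-> D (fst p) /\ wover D w.
Proof.
  unfold wover. simpl. split.
  - intros H. split; auto.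
  - intros [H1 H2] q [<- | Hq]; auto.
Qed.

Lemma wreduced_app_l (u v : list (A * bool)) : wreduced (u ++ v) -> wreduced u /\ wreduced v.
Proof.
  induction u as [|[a s] u IH]; simpl; [tauto|].
  intros [H1 H2]. destruct (IH H2) as [R1 R2]. split; auto. split; auto.
  destruct u as [|[a' s'] u']; simpl in *; auto.
Qed.

Lemma wreduced_app (u v : list (A * bool)) (D : A -> Prop) :
  wreduced u -> wreduced v -> wover (fun a => ~ D a) u ->
  (forall q, hd_error v = Some q -> D (fst q)) -> wreduced (u ++ v).
Proof.
  induction u as [|[a s] u IH]; simpl; auto.
  intros [H1 H2] Rv Hu Hv. apply wover_cons in Hu as [Ha Hu].
  split; [|apply IH; auto].
  destruct u as [|[a' s'] u']; simpl in *; auto.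
  destruct v as [|[a' s'] v']; simpl in *; auto.
  intros [-> _]. apply Ha, (Hv _ eq_refl).
Qed.

End Words.

Section Eval.
Context {A : Type} {T : group} (f : A -> T).

Fixpoint evalw (w : list (A * bool)) : T :=
  match w with
  | [] => gone T
  | (a, s) :: w' => gmul T (letter (f a) s) (evalw w')
  end.

Lemma evalw_app w1 w2 : evalw (w1 ++ w2) = gmul T (evalw w1) (evalw w2).
Proof.
  induction w1 as [|[a s] w1 IH]; simpl.
  - rewrite gmul1l. reflexivity.
  - rewrite IH, gmulA. reflexivity.
Qed.

Lemma evalw_winv w : evalw (winv w) = ginv T (evalw w).
Proof.
  induction w as [|[a s] w IH]; unfold winv in *; simpl.
  - symmetry. apply inv_one.
  - rewrite evalw_app, IH, inv_mul. simpl. rewrite gmul1r. f_equal.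
    unfold letter. destruct s; simpl; [reflexivity|]. symmetry. apply inv_inv.
Qed.

Lemma evalw_single a : evalw [(a, true)] = f a.
Proof. apply gmul1r. Qed.

End Eval.

Lemma evalw_ext {A} {T : group} (f g : A -> T) w :
  wover (fun a => f a = g a) w -> evalw f w = evalw g w.
Proof.
  induction w as [|[a s] w IH]; simpl; intros H; [reflexivity|].
  apply wover_cons in H as [Ha H]. simpl in Ha. rewrite Ha, IH by exact H. reflexivity.
Qed.

Lemma evalw_map {A B} {T : group} (h : A -> B) (f : B -> T) w :
  evalw f (map (fun p => (h (fst p), snd p)) w) = evalw (fun a => f (h a)) w.
Proof. induction w as [|[a s] w IH]; simpl; [reflexivity|]. rewrite IH. reflexivity. Qed.

Lemma wreduce {A} (w : list (A * bool)) : exists w', wreduced w' /\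
  (forall p, In p w' -> In p w) /\ forall (T : group) (f : A -> T), evalw f w' = evalw f w.
Proof.
  induction w as [|[a s] w IH].
  - exists []. simpl. auto.
  - destruct IH as [w' [Hr [Hin Hev]]].
    destruct (classic (exists t w'', w' = (a, t) :: w'' /\ s <> t))
      as [[t [w'' [-> Hst]]]|Hn].
    + exists w''. split; [apply Hr|]. split; [intros p Hp; right; apply Hin; right; exact Hp|].
      intros T f. simpl. rewrite <- Hev. simpl. rewrite gmulA.
      replace (gmul T (letter (f a) s) (letter (f a) t)) with (gone T); [symmetry; apply gmul1l|].
      unfold letter. destruct s, t; try congruence; symmetry; [apply gmulVr|apply gmulVl].
    + exists ((a, s) :: w'). split; [|split].
      * split; [|exact Hr]. destruct w' as [|[a' t] w'']; auto.
        intros [<- Hst]. apply Hn. eauto.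
      * intros p [<- | Hp]; [left|right; apply Hin]; auto.
      * intros T f. simpl. rewrite Hev. reflexivity.
Qed.

Section Generation.
Variable G : group.
Implicit Types S H : G -> Prop.

Lemma gen_subgroup S : is_subgroup (gen S).
Proof.
  split; [|split].
  - intros H (H1 & _) _. exact H1.
  - intros x y Hx Hy H HH HS. apply (proj1 (proj2 HH)); [apply Hx|apply Hy]; auto.
  - intros x Hx H HH HS. apply (proj2 (proj2 HH)), Hx; auto.
Qed.

Lemma gen_incl S x : S x -> gen S x.
Proof. intros Hx H _ HS. auto. Qed.

Lemma gen_min S H : is_subgroup H -> subset S H -> subset (gen S) H.
Proof. intros HH HS x Hx. apply Hx; auto. Qed.

Lemma gen_mono S S' : subset S S' -> subset (gen S) (gen S').
Proof. intros HS. apply gen_min; [apply gen_subgroup|]. intros x Hx. apply gen_incl, HS, Hx. Qed.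

Lemma gen_ext S S' : (forall x, S x <-> S' x) -> forall x, gen S x <-> gen S' x.
Proof. intros E x. split; apply gen_mono; intros y; apply E. Qed.

Lemma subgroup_of_gen H S : (forall x, H x <-> gen S x) -> is_subgroup H.
Proof.
  intros E. destruct (gen_subgroup S) as (H1 & H2 & H3).
  split; [|split]; intros; apply E; [apply H1|apply H2|apply H3]; try apply E; auto.
Qed.

Lemma subgroup_evalw {A} H (f : A -> G) w :
  is_subgroup H -> wover (fun a => H (f a)) w -> H (evalw f w).
Proof.
  intros (H1 & H2 & H3). induction w as [|[a s] w IH]; simpl; intros Hw; [exact H1|].
  apply wover_cons in Hw as [Ha Hw]. simpl in Ha.
  apply H2; [|apply IH, Hw]. unfold letter. destruct s; auto.
Qed.

Lemma gen_image_word {A} (D : A -> Prop) (f : A -> G) x :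
  gen (fun y => exists a, D a /\ f a = y) x <-> exists w, wover D w /\ evalw f w = x.
Proof.
  split.
  - intros Hx. apply Hx.
    + split; [|split].
      * exists []. split; [intros p []|reflexivity].
      * intros y z [wy [Hy <-]] [wz [Hz <-]]. exists (wy ++ wz).
        split; [apply wover_app; auto|apply evalw_app].
      * intros y [wy [Hy <-]]. exists (winv wy). split; [apply wover_winv, Hy|apply evalw_winv].
    + intros y [a [Ha <-]]. exists [(a, true)].
      split; [apply wover_cons; split; [exact Ha|intros p []]|apply evalw_single].
  - intros [w [Hw <-]]. apply subgroup_evalw; [apply gen_subgroup|].
    intros p Hp. apply gen_incl. exists (fst p). auto.
Qed.

Lemma gen_word S x : gen S x <-> exists w, wover S w /\ evalw (fun y => y) w = x.
Proof.
  rewrite <- gen_image_word. apply gen_ext. intros y. split; [eauto|].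
  intros [a [Ha <-]]. exact Ha.
Qed.

Lemma gen_list_word (l : list G) x : gen_list l x <->
  exists w, wover (fun i => i < length l) w /\ evalw (fun i => nth i l (gone G)) w = x.
Proof.
  rewrite <- gen_image_word. apply gen_ext. intros y. split.
  - intros Hy. apply In_nth with (d := gone G) in Hy. exact Hy.
  - intros [i [Hi <-]]. apply nth_In, Hi.
Qed.

Lemma subgroup_zpow H c z : is_subgroup H -> H c -> H (zpow c z).
Proof.
  intros (H1 & H2 & H3) Hc.
  assert (Hp : forall n, H (gpow c n)) by (induction n; simpl; auto).
  destruct z; simpl; auto.
Qed.

End Generation.

Section Free.
Variable G : group.
Implicit Types S H B : G -> Prop.

Definition independent_on {A} (D : A -> Prop) (f : A -> G) : Prop :=
  forall w, w <> [] -> wover D w -> wreduced w -> evalw f w <> gone G.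

(* [eval_word] and [reduced] are convertible to [evalw (fun y => y)] and [wreduced]. *)
Lemma free_basisE H B :
  free_basis H B <-> (forall x, H x <-> gen B x) /\ independent_on B (fun y => y).
Proof.
  unfold free_basis, independent_on, wover.
  setoid_rewrite Forall_forall. reflexivity.
Qed.

Lemma independent_relation {A} (D : A -> Prop) (g : A -> G) w :
  independent_on D g -> wover D w -> evalw g w = gone G ->
  forall (T : group) (f : A -> T), evalw f w = gone T.
Proof.
  intros Hind Hw E T f.
  destruct (wreduce w) as [[|p w'] [Hr [Hin Hev]]].
  - rewrite <- Hev. reflexivity.
  - exfalso. apply (Hind (p :: w')); [discriminate| |exact Hr|].
    + intros q Hq. apply Hw, Hin, Hq.
    + rewrite Hev. exact E.
Qed.

Definition morph_on {T : group} H (psi : G -> T) : Prop :=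
  forall x y, H x -> H y -> psi (gmul G x y) = gmul T (psi x) (psi y).

Section MorphOn.
Context {T : group} (H : G -> Prop) (psi : G -> T).
Hypotheses (HH : is_subgroup H) (Hpsi : morph_on H psi).

Lemma morph_on_one : psi (gone G) = gone T.
Proof.
  destruct HH as [H1 _]. apply (mul_cancel_l (psi (gone G))).
  rewrite <- Hpsi, gmul1l, gmul1r by exact H1. reflexivity.
Qed.

Lemma morph_on_inv x : H x -> psi (ginv G x) = ginv T (psi x).
Proof.
  intros Hx. destruct HH as (_ & _ & H3). apply inv_uniq.
  rewrite <- Hpsi, gmulVr by auto. apply morph_on_one.
Qed.

Lemma morph_on_evalw {A} (f : A -> G) w :
  wover (fun a => H (f a)) w -> psi (evalw f w) = evalw (fun a => psi (f a)) w.
Proof.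
  induction w as [|[a s] w IH]; simpl; intros Hw; [apply morph_on_one|].
  apply wover_cons in Hw as [Ha Hw]. simpl in Ha.
  destruct HH as (_ & _ & H3).
  rewrite Hpsi, IH by (auto; unfold letter; destruct s; auto; apply subgroup_evalw; auto).
  unfold letter. destruct s; [reflexivity|]. rewrite morph_on_inv by exact Ha. reflexivity.
Qed.

End MorphOn.

Lemma morph_on_agree {T : group} H S (phi psi : G -> T) :
  (forall x, H x <-> gen S x) -> morph_on H phi -> morph_on H psi ->
  (forall x, S x -> phi x = psi x) -> forall x, H x -> phi x = psi x.
Proof.
  intros HS Hphi Hpsi E x Hx.
  assert (HH : is_subgroup H) by (eapply subgroup_of_gen; eauto).
  assert (Hsub : is_subgroup (fun y => H y /\ phi y = psi y)).
  { pose proof HH as (H1 & H2 & H3). split; [|split].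
    - split; [exact H1|]. rewrite (morph_on_one H phi), (morph_on_one H psi); auto.
    - intros y z [Hy Ey] [Hz Ez]. split; [auto|].
      rewrite Hphi, Hpsi, Ey, Ez by auto. reflexivity.
    - intros y [Hy Ey]. split; [auto|].
      rewrite (morph_on_inv H phi), (morph_on_inv H psi), Ey; auto. }
  apply (gen_min _ S _ Hsub); [|apply HS, Hx].
  intros y Sy. split; [apply HS, gen_incl, Sy|apply E, Sy].
Qed.

Lemma independent_word_hom {T : group} B (f : G -> T) :
  independent_on B (fun y => y) ->
  exists psi : G -> T, forall w, wover B w -> psi (evalw (fun y => y) w) = evalw f w.
Proof.
  intros Hind.
  exists (fun x => match excluded_middle_informative
            (exists w, wover B w /\ evalw (fun y => y) w = x) with
          | left e => evalw f (proj1_sig (constructive_indefinite_description _ e))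
          | right _ => gone T end).
  intros w Hw.
  destruct excluded_middle_informative as [e|n]; [|exfalso; apply n; eauto].
  destruct (constructive_indefinite_description _ e) as [w0 [Hw0 E0]]. simpl.
  assert (K : evalw f (winv w0 ++ w) = gone T).
  { apply (independent_relation B (fun y => y)); auto.
    - apply wover_app. split; [apply wover_winv|]; assumption.
    - rewrite evalw_app, evalw_winv, E0. apply gmulVl. }
  rewrite evalw_app, evalw_winv in K.
  apply inv_uniq in K. rewrite inv_inv in K. symmetry. exact K.
Qed.

Lemma free_basis_extend {T : group} H B (f : G -> T) : free_basis H B ->
  exists psi, morph_on H psi /\ forall b, B b -> psi b = f b.
Proof.
  intros [HB Hind]%free_basisE.
  destruct (independent_word_hom B f Hind) as [psi Hpsi].
  exists psi. split.
  - intros x y Hx Hy.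
    apply HB, gen_word in Hx as [wx [Bx <-]]. apply HB, gen_word in Hy as [wy [By <-]].
    rewrite <- evalw_app, !Hpsi, evalw_app; auto. apply wover_app. auto.
  - intros b Bb. assert (E := Hpsi [(b, true)]). rewrite !evalw_single in E.
    apply E, wover_cons. split; [exact Bb|intros p []].
Qed.

End Free.

(** * Permutation representations of reduced words *)

Module Permutations.
Import all_boot all_fingroup zify.
Set Implicit Arguments. Unset Strict Implicit.

Lemma perm_extend (T : finType) (D : {set T}) (f : T -> T) :
  {in D &, injective f} -> {s : {perm T} | forall x, x \in D -> s x = f x}.
Proof.
move=> finj.
set e1 := enum (~: D); set e2 := enum (~: (f @: D)).
have se : size e1 = size e2.
  rewrite /e1 /e2 -!cardE cardsCs [#|~: (f @: D)|]cardsCs !setCK (card_in_imset finj) //.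
pose g x := if x \in D then f x else nth x e2 (index x e1).
have ginj : injective g.
  move=> x y; rewrite /g.
  have Hn z : z \notin D -> nth z e2 (index z e1) \in e2.
    by move=> zD; apply: mem_nth; rewrite -se index_mem /e1 mem_enum inE zD.
  case: ifP => xD; case: ifP => yD.
  - exact: finj.
  - by move=> E; have := Hn y (negbT yD); rewrite -E /e2 mem_enum inE imset_f.
  - by move=> E; have := Hn x (negbT xD); rewrite E /e2 mem_enum inE imset_f.
  - move=> E.
    have x1 : x \in e1 by rewrite /e1 mem_enum inE xD.
    have y1 : y \in e1 by rewrite /e1 mem_enum inE yD.
    have ix : index x e1 < size e2 by rewrite -se index_mem.
    have iy : index y e1 < size e2 by rewrite -se index_mem.
    have Ei : index x e1 = index y e1.
      apply/eqP; rewrite -(nth_uniq x ix iy (enum_uniq _)).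
      by rewrite E (set_nth_default x y iy).
    by rewrite -(nth_index x x1) Ei (set_nth_default y x) ?nth_index // index_mem.
by exists (perm ginj) => x xD; rewrite permE /g xD.
Qed.

Definition Sym (m : nat) : Defs.group :=
  @Defs.Group {perm 'I_m} *%g 1%g (fun x => x^-1)%g
    (@mulgA _) (@mul1g _) (@mulg1 _) (@mulVg _) (@mulgV _).

Lemma wreduced_nth (w : seq (nat * bool)) : wreduced w ->
  forall j i s, j.+1 < size w -> nth (0, true) w j = (i, s) ->
  nth (0, true) w j.+1 <> (i, ~~ s).
Proof.
elim: w => [|[i0 s0] w IH] //= [Hh Hr] [|j] i s /= Hj; last exact: IH.
case: w Hh {IH} Hr Hj => [|[i1 s1] w] //= Hh _ _ [E0 E0'] [E1 E2]; subst.
by apply: Hh; split => //; case: s.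
Qed.

(* A reduced word [w] of length [L] acts on the positions [0..L]: the letter
   at position [p] moves [p] to [p+1], so the whole word moves [0] to [L]. *)
Lemma reduced_word_position_perms (w : seq (nat * bool)) : wreduced w ->
  exists tau : nat -> Sym (size w).+1, forall j i s, j < size w ->
    nth (0, true) w j = (i, s) ->
    (letter (tau i) s : {perm 'I_(size w).+1}) (inord j) = inord j.+1.
Proof.
move=> wred; set L := size w.
pose d := (0, true).
pose fwd i (p : 'I_L.+1) := (p < L) && (nth d w p == (i, true)).
pose bwd i (p : 'I_L.+1) := (0 < p) && (nth d w p.-1 == (i, false)).
pose f i (p : 'I_L.+1) : 'I_L.+1 :=
  if fwd i p then inord p.+1 else if bwd i p then inord p.-1 else p.
have red := wreduced_nth wred.
have iK a : a < L.+1 -> nat_of_ord (inord a : 'I_L.+1) = a by apply: inordK.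
pose D i := [set p | fwd i p || bwd i p].
have Hf i p : p \in D i ->
    (p < L /\ nth d w p = (i, true) /\ f i p = inord p.+1) \/
    (0 < p /\ nth d w p.-1 = (i, false) /\ f i p = inord p.-1).
  rewrite inE /f /fwd /bwd.
  case: ifP => [/andP[H1 /eqP H2] _|_ /= /andP[H1 /eqP H2]]; first by left.
  by right; rewrite H1 H2 eqxx.
have finj i : {in D i &, injective (f i)}.
  move=> p q Hp Hq.
  have pb := ltn_ord p; have qb := ltn_ord q.
  case: (Hf i p Hp) => [[p1 [p2 ->]]|[p1 [p2 ->]]];
  case: (Hf i q Hq) => [[q1 [q2 ->]]|[q1 [q2 ->]]];
  move/(congr1 (@nat_of_ord _)); rewrite !iK; try lia; move=> E;
  try (by apply: val_inj => /=; lia).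
  - by case: (red p i true) => //; [lia | rewrite (_ : p.+1 = q.-1) //; lia].
  - by case: (red q i true) => //; [lia | rewrite (_ : q.+1 = p.-1) //; lia].
pose tau i : Sym L.+1 := sval (perm_extend (finj i)).
have tauE i p : fwd i p || bwd i p -> tau i p = f i p.
  by move=> pD; apply: (svalP (perm_extend (finj i))); rewrite inE.
exists tau => j i [] jL E /=.
- by rewrite tauE /f /fwd iK ?E ?eqxx ?jL //; lia.
- have H : tau i (inord j.+1) = inord j.
    rewrite tauE /f /fwd /bwd iK //= E eqxx ?orbT //.
    by case: ifP => // /andP[H1 /eqP H2]; case: (red j i false H1 E).
  by rewrite -{1}H permK.
Qed.

Lemma reduced_word_perm_nontrivial (w : seq (nat * bool)) : w <> [::] -> wreduced w ->
  exists m (tau : nat -> Sym m), evalw tau w <> gone (Sym m).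
Proof.
move=> wne /reduced_word_position_perms [tau step].
set L := size w in tau step *.
have Lpos : 0 < L by rewrite lt0n size_eq0; apply/eqP.
have tail k : k <= L ->
    (evalw tau (drop (L - k) w) : {perm 'I_L.+1}) (inord (L - k)) = inord L.
  elim: k => [|k IH] kL; first by rewrite subn0 drop_size /= perm1.
  have jL : L - k.+1 < L by lia.
  rewrite (drop_nth (0, true) jL); case E: (nth (0, true) w (L - k.+1)) => [i s] /=.
  rewrite permM (step _ i s jL E) (_ : (L - k.+1).+1 = L - k); last by lia.
  by apply: IH; lia.
exists L.+1, tau => H.
have := tail L (leqnn L); rewrite subnn drop0 H /= perm1.
by move/(congr1 (@nat_of_ord _)); rewrite !inordK //; lia.
Qed.

Lemma tuple_map_inj_surj (m n : nat) (Phi : (nat -> Sym m) -> (nat -> Sym m)) :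
  (forall t t', (forall i, (i < n)%coq_nat -> Phi t i = Phi t' i) ->
     forall i, (i < n)%coq_nat -> t i = t' i) ->
  forall ts, exists t, forall i, (i < n)%coq_nat -> Phi t i = ts i.
Proof.
move=> Hinj ts.
pose ext (g : {ffun 'I_n -> {perm 'I_m}}) (j : nat) : Sym m :=
  odflt (1%g : {perm 'I_m}) (omap g (insub j)).
have extE g (o : 'I_n) : ext g o = g o by rewrite /ext valK.
pose F g : {ffun 'I_n -> {perm 'I_m}} := [ffun o : 'I_n => Phi (ext g) o].
have Finj : injective F.
  move=> g g' E; apply/ffunP => o.
  rewrite -!extE; apply: Hinj; last exact/ltP.
  move=> i /ltP il.
  by move/ffunP: E => /(_ (Ordinal il)); rewrite !ffunE.
have [G _ GF] := injF_bij Finj.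
exists (ext (G [ffun o : 'I_n => ts o])) => i /ltP il.
by move/ffunP: (GF [ffun o : 'I_n => ts o]) => /(_ (Ordinal il)); rewrite !ffunE.
Qed.

End Permutations.
Import Permutations.

(** * The Hopf property of free groups *)

Section Hopf.
Variable G : group.

Fixpoint index_of (x : G) (l : list G) : nat :=
  match l with
  | [] => 0
  | y :: l' => if excluded_middle_informative (x = y) then 0 else S (index_of x l')
  end.

Lemma index_of_nth l i : NoDup l -> i < length l -> index_of (nth i l (gone G)) l = i.
Proof.
  revert i. induction l as [|y l IH]; intros [|i] Hl Hi; simpl in *; try lia;
    destruct excluded_middle_informative as [E|E]; [reflexivity|congruence| |].
  - inversion Hl as [|? ? Hy]. exfalso. apply Hy. rewrite <- E. apply nth_In. lia.
  - inversion Hl. f_equal. apply IH; auto. lia.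
Qed.

Variables (H B : G -> Prop) (bl xl : list G).
Hypotheses (fb : free_basis H B) (Hbl : NoDup bl) (HblB : forall b, In b bl -> B b)
  (Hxl : forall x, H x <-> gen_list xl x) (Hlen : length xl <= length bl).

Let n := length bl.

Lemma nth_generator_in i : H (nth i xl (gone G)).
Proof.
  apply Hxl. destruct (Nat.lt_ge_cases i (length xl)) as [Hi|Hi].
  - apply gen_incl, nth_In, Hi.
  - rewrite nth_overflow by exact Hi. apply gen_subgroup.
Qed.

(* Homomorphisms to [Sym m] are determined by their values on [xl], and (by
   freeness) there are as many of them as assignments of values to [bl]; since
   [xl] is not longer than [bl], every assignment of values to [xl] occurs. *)
Lemma hopf_lift m (ts : nat -> Sym m) : exists psi : G -> Sym m,
  morph_on G H psi /\ forall i, i < n -> psi (nth i xl (gone G)) = ts i.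
Proof.
  assert (Ext : forall tau : nat -> Sym m, exists psi, morph_on G H psi /\
            forall i, i < n -> psi (nth i bl (gone G)) = tau i).
  { intros tau.
    destruct (free_basis_extend G H B (fun b => tau (index_of b bl)) fb) as [psi [Hm Hb]].
    exists psi. split; [exact Hm|]. intros i Hi.
    rewrite Hb by (apply HblB, nth_In, Hi). rewrite index_of_nth; auto. }
  pose (Psi tau := proj1_sig (constructive_indefinite_description _ (Ext tau))).
  assert (PsiP : forall tau, morph_on G H (Psi tau) /\
            forall i, i < n -> Psi tau (nth i bl (gone G)) = tau i).
  { intros tau. exact (proj2_sig (constructive_indefinite_description _ (Ext tau))). }
  assert (Hinj : forall t t',
            (forall i, i < n -> Psi t (nth i xl (gone G)) = Psi t' (nth i xl (gone G))) ->
            forall i, i < n -> t i = t' i).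
  { intros t t' E i Hi.
    rewrite <- (proj2 (PsiP t) i Hi), <- (proj2 (PsiP t') i Hi).
    apply (morph_on_agree G H (fun y => In y xl)); [exact Hxl|apply PsiP|apply PsiP| |].
    - intros y Hy. apply In_nth with (d := gone G) in Hy as [j [Hj <-]]. apply E. lia.
    - apply (proj1 (free_basisE G H B) fb), gen_incl, HblB, nth_In, Hi. }
  destruct (@tuple_map_inj_surj m n _ Hinj ts) as [tau Htau].
  exists (Psi tau). split; [apply PsiP|exact Htau].
Qed.

(* Indices beyond [length xl] read [1], so this also forces [length xl = length bl]. *)
Lemma hopf_independent : independent_on G (fun i => i < n) (fun i => nth i xl (gone G)).
Proof.
  intros w wne Hw Hr E.
  destruct (reduced_word_perm_nontrivial wne Hr) as [m [tau Htau]].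
  destruct (hopf_lift m tau) as [psi [Hpsi Hxt]].
  assert (HH : is_subgroup H) by (eapply subgroup_of_gen; exact Hxl).
  apply Htau. rewrite <- (morph_on_one G H psi HH Hpsi), <- E.
  rewrite (morph_on_evalw G H psi HH Hpsi) by (intros p _; apply nth_generator_in).
  symmetry. apply evalw_ext. intros p Hp. apply Hxt, Hw, Hp.
Qed.

End Hopf.

Lemma independent_nth_length (G : group) (l : list G) n :
  independent_on G (fun i => i < n) (fun i => nth i l (gone G)) -> n <= length l.
Proof.
  intros Hind. destruct (Nat.le_gt_cases n (length l)) as [Hn|Hn]; [exact Hn|].
  exfalso. apply (Hind [(n - 1, true)]); [discriminate| |simpl; tauto|].
  - apply wover_cons. split; [simpl; lia|intros p []].
  - rewrite evalw_single. apply nth_overflow. lia.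
Qed.

Lemma free_basis_length_le (G : group) (H B : G -> Prop) (bl xl : list G) :
  free_basis H B -> NoDup bl -> (forall b, In b bl -> B b) ->
  (forall x, H x <-> gen_list xl x) -> length bl <= length xl.
Proof.
  intros fb Hbl HblB Hxl.
  destruct (Nat.le_gt_cases (length xl) (length bl)) as [Hle|Hgt]; [|lia].
  exact (independent_nth_length G xl _ (hopf_independent G H B bl xl fb Hbl HblB Hxl Hle)).
Qed.

(** * Adjoining a free generator *)

Lemma list_split_first {X} (P : X -> Prop) (l : list X) : exists l1 l2, l = l1 ++ l2 /\
  (forall y, In y l1 -> ~ P y) /\ (forall y, hd_error l2 = Some y -> P y).
Proof.
  induction l as [|y l [l1 [l2 [-> [H1 H2]]]]].
  - exists [], []. simpl. split; [reflexivity|split; [tauto|discriminate]].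
  - destruct (classic (P y)) as [Py|Py].
    + exists [], (y :: l1 ++ l2). simpl. split; [reflexivity|split; [tauto|]].
      intros z [= <-]. exact Py.
    + exists (y :: l1), l2. split; [reflexivity|split; [|exact H2]].
      intros z [<- | Hz]; auto.
Qed.

(* If [c :: gl] is a free basis, then [<gl>] and [<c>] generate their free product:
   normal forms of words over [X ∪ {c}], with [X] independent in [<gl>], are reduced
   words in [c :: gl]. *)
Section AdjoinFree.
Variables (G : group) (c : G) (gl : list G).
Let n := S (length gl).
Let x i := nth i (c :: gl) (gone G).
Hypothesis Hind : independent_on G (fun i => i < n) x.

Lemma tail_word y : gen_list gl y ->
  exists v, wreduced v /\ wover (fun i => 0 < i < n) v /\ evalw x v = y.
Proof.
  intros [w [Hw <-]]%gen_list_word.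
  destruct (wreduce (map (fun p => (S (fst p), snd p)) w)) as [v [Hr [Hin Hev]]].
  exists v. split; [exact Hr|split].
  - intros p Hp. apply Hin, in_map_iff in Hp as [q [<- Hq]]. specialize (Hw q Hq).
    simpl in *. unfold n. lia.
  - rewrite Hev, evalw_map. reflexivity.
Qed.

Lemma independent_head_not_in_tail : ~ gen_list gl c.
Proof.
  intros [v [Hr [Hv Ev]]]%tail_word.
  apply (Hind (v ++ [(0, false)])).
  - destruct v; discriminate.
  - apply wover_app. split; [intros p Hp; apply Hv, Hp|].
    apply wover_cons. split; [simpl; unfold n; lia|intros p []].
  - apply (wreduced_app _ _ (fun i => i = 0)); [exact Hr|simpl; tauto| |].
    + intros p Hp. specialize (Hv p Hp). lia.
    + intros q [= <-]. reflexivity.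
  - rewrite evalw_app, Ev. simpl. unfold letter. rewrite gmul1r. apply gmulVr.
Qed.

Variable X : G -> Prop.
Hypotheses (HX : forall y, X y -> gen_list gl y) (HXind : independent_on G X (fun y => y)).

Definition normal_form (u : list (nat * bool)) (w : list (G * bool)) : Prop :=
  wreduced u /\ wover (fun i => i < n) u /\ evalw x u = evalw (fun y => y) w /\
  (u = [] <-> w = []) /\ forall s, hd_error u = Some (0, s) <-> hd_error w = Some (c, s).

Lemma normal_form_cons_c s u w : wreduced ((c, s) :: w) -> normal_form u w ->
  normal_form ((0, s) :: u) ((c, s) :: w).
Proof.
  intros Hr (Ur & Uw & Ue & Un & Uh). split; [|split; [|split; [|split]]].
  - split; [|exact Ur]. destruct u as [|[i t] u']; [exact I|].
    intros [<- Hst]. assert (Hw := proj1 (Uh t) eq_refl).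
    destruct w as [|q w']; [discriminate|]. injection Hw as ->. apply (proj1 Hr). auto.
  - apply wover_cons. split; [simpl; unfold n; lia|exact Uw].
  - simpl. rewrite Ue. reflexivity.
  - split; discriminate.
  - intros t. simpl. split; intros [= ->]; reflexivity.
Qed.

Lemma normal_form_app_segment beta u w : beta <> [] -> wreduced beta -> wover X beta ->
  (forall q, hd_error w = Some q -> fst q = c) -> normal_form u w ->
  exists u', normal_form u' (beta ++ w).
Proof.
  intros bne Rb Sb Hw (Ur & Uw & Ue & Un & Uh).
  assert (Hb : gen_list gl (evalw (fun y => y) beta))
    by (apply subgroup_evalw; [apply gen_subgroup|exact (fun p Hp => HX _ (Sb p Hp))]).
  destruct (tail_word _ Hb) as [[|[i s] v] [Vr [Vw Ve]]];
    [exfalso; apply (HXind beta); auto|].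
  assert (Huc : forall q, hd_error u = Some q -> fst q = 0).
  { intros q Hq. destruct w as [|[a t'] w'].
    - rewrite (proj2 Un eq_refl) in Hq. discriminate.
    - specialize (Hw _ eq_refl). simpl in Hw. subst a.
      rewrite (proj2 (Uh t') eq_refl) in Hq. injection Hq as <-. reflexivity. }
  exists ((i, s) :: v ++ u). split; [|split; [|split; [|split]]].
  - apply (wreduced_app ((i, s) :: v) u (fun j => j = 0)); auto.
    intros p Hp. specialize (Vw p Hp). lia.
  - rewrite app_comm_cons. apply wover_app. split; [|exact Uw].
    intros p Hp. specialize (Vw p Hp). lia.
  - rewrite app_comm_cons, !evalw_app, Ve, Ue. reflexivity.
  - split; [discriminate|]. destruct beta; [contradiction|discriminate].
  - intros t. destruct beta as [|[a t'] beta']; [contradiction|]. simpl.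
    specialize (Vw _ (or_introl eq_refl)). simpl in Vw.
    split; intros [= -> ->]; [lia|].
    exfalso. apply independent_head_not_in_tail, HX, (Sb (c, t)). left. reflexivity.
Qed.

Lemma normal_form_exists w : wreduced w -> wover (fun y => X y \/ y = c) w ->
  exists u, normal_form u w.
Proof.
  remember (length w) as N eqn:EN. revert w EN.
  induction N as [N IH] using lt_wf_ind. intros w -> Hr Hw.
  destruct (list_split_first (fun p => fst p = c) w) as [beta [b [-> [Hb1 Hb2]]]].
  apply wreduced_app_l in Hr as [Rb Rw]. apply wover_app in Hw as [Hwb Hwr].
  destruct beta as [|p beta'].
  - destruct b as [|[a s] b'].
    { exists []. split; [exact I|split; [intros p []|split; [reflexivity|]]].
      split; [tauto|]. intros s. simpl. split; discriminate. }
    specialize (Hb2 _ eq_refl). simpl in Hb2. subst a.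
    destruct (IH (length b') ltac:(simpl; lia) b' eq_refl (proj2 Rw)) as [u Hu];
      [exact (proj2 (proj1 (wover_cons _ _ _) Hwr))|].
    exists ((0, s) :: u). apply normal_form_cons_c; assumption.
  - destruct (IH (length b) ltac:(rewrite length_app; simpl; lia) b eq_refl Rw Hwr)
      as [u Hu].
    apply (normal_form_app_segment _ u); [discriminate|exact Rb| |exact Hb2|exact Hu].
    intros q Hq. destruct (Hwb q Hq) as [Sq|Eq]; [exact Sq|]. exfalso. exact (Hb1 q Hq Eq).
Qed.

Lemma independent_adjoin : independent_on G (fun y => X y \/ y = c) (fun y => y).
Proof.
  intros w wne Hw Hr E.
  destruct (normal_form_exists w Hr Hw) as [u (Ur & Uw & Ue & Un & _)].
  apply (Hind u); [|exact Uw|exact Ur|rewrite Ue; exact E].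
  intros ->. apply wne, Un. reflexivity.
Qed.

End AdjoinFree.

Section Rank.
Variable G : group.
Implicit Types R H B : G -> Prop.

Lemma rank_le_ext H H' m : (forall x, H x <-> H' x) -> rank_le H m -> rank_le H' m.
Proof. intros E [l [Hl El]]. exists l. split; [exact Hl|]. intros x. rewrite <- E. apply El. Qed.

Lemma small_or_distinct B m :
  (exists l, length l < m /\ forall x, B x <-> In x l) \/
  (exists bl, NoDup bl /\ length bl = m /\ forall b, In b bl -> B b).
Proof.
  induction m as [|m [[l [Hl El]]|[bl [Hnd [Hl Hb]]]]].
  - right. exists []. split; [constructor|split; [reflexivity|intros b []]].
  - left. exists l. split; [lia|exact El].
  - destruct (classic (exists b, B b /\ ~ In b bl)) as [[b [Bb Nb]]|N].
    + right. exists (b :: bl). split; [constructor; auto|split; [simpl; lia|]].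
      intros y [<- | Hy]; auto.
    + left. exists bl. split; [lia|]. intros y. split; [|apply Hb].
      intros By. apply NNPP. intros Ny. apply N. eauto.
Qed.

Lemma rank_le_mono H m m' : rank_le H m -> m <= m' -> rank_le H m'.
Proof. intros [l [Hl El]] Hm. exists l. split; [lia|exact El]. Qed.

Lemma free_basis_list_rank H B l : free_basis H B -> (forall x, B x <-> In x l) ->
  rank_le H (length l).
Proof.
  intros [HB _] El. exists l. split; [reflexivity|].
  intros x. rewrite HB. apply gen_ext, El.
Qed.

Lemma free_basis_rank_eq H B m : free_basis H B -> rank_eq H m ->
  exists bl, NoDup bl /\ length bl = m /\ forall b, In b bl -> B b.
Proof.
  intros fb [_ Hmin]. destruct (small_or_distinct B m) as [[l [Hl El]]|Hd]; [|exact Hd].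
  exfalso. exact (Hmin _ Hl (free_basis_list_rank _ _ _ fb El)).
Qed.

Lemma gen_union_gen R B (Q : G -> Prop) : (forall x, R x <-> gen B x) ->
  forall x, gen (fun y => R y \/ Q y) x <-> gen (fun y => B y \/ Q y) x.
Proof.
  intros E x. split.
  - apply gen_min; [apply gen_subgroup|]. intros y [Ry|Qy].
    + apply E in Ry. revert Ry. apply gen_mono. intros z Bz. left. exact Bz.
    + apply gen_incl. right. exact Qy.
  - apply gen_mono. intros y [By|Qy]; [left; apply E, gen_incl, By|right; exact Qy].
Qed.

Lemma rank_le_adjoin k r (c : G) (gl : list G) R :
  k_free G k -> r < k -> length gl <= r -> (forall x, R x -> gen_list gl x) ->
  rank_eq R r -> rank_le (gen (fun y => R y \/ y = c)) r ->
  rank_le (gen_list (c :: gl)) r.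
Proof.
  intros kf Hrk Hgl HRgl HRr HP.
  destruct (kf (gen_list (c :: gl))) as [B fb].
  { exists (c :: gl). split; [simpl; lia|reflexivity]. }
  destruct (small_or_distinct B (S r)) as [[l [Hl El]]|[bl [Hnd [Hbl HbB]]]].
  { apply (rank_le_mono _ (length l)); [exact (free_basis_list_rank _ _ _ fb El)|lia]. }
  assert (Hind := hopf_independent G _ B bl (c :: gl) fb Hnd HbB (fun x => iff_refl _)
                    ltac:(simpl; lia)).
  assert (Hlen := independent_nth_length G _ _ Hind). simpl in Hlen.
  rewrite Hbl, (ltac:(lia) : r = length gl) in Hind.
  destruct (kf R (rank_le_mono R r k (proj1 HRr) ltac:(lia))) as [BR fbR].
  destruct (free_basis_rank_eq R BR r fbR HRr) as [brl [Hnd' [Hbrl HbrlB]]].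
  assert (HBRgl : forall y, BR y -> gen_list gl y).
  { intros y By. apply HRgl, (proj1 fbR), gen_incl, By. }
  assert (fbP : free_basis (gen (fun y => R y \/ y = c)) (fun y => BR y \/ y = c)).
  { apply free_basisE. split; [apply gen_union_gen, (proj1 fbR)|].
    apply (independent_adjoin G c gl Hind BR HBRgl), (proj1 (free_basisE G R BR) fbR). }
  destruct HP as [pl [Hpl Epl]].
  assert (Hle := free_basis_length_le G _ _ (c :: brl) pl fbP).
  simpl in Hle. enough (S (length brl) <= length pl) by lia.
  apply Hle; [|intros b [<- | Hb]; [right|left; apply HbrlB]; auto|exact Epl].
  constructor; [|exact Hnd']. intros Hc.
  apply (independent_head_not_in_tail G c gl Hind), HBRgl, HbrlB, Hc.
Qed.

End Rank.

(** * Walking through a connected saturated set *)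

Lemma list_choice {X Y} (P : Y -> Prop) (Q : X -> Y -> Prop) (xs : list X) :
  (forall x, In x xs -> exists y, P y /\ Q x y) ->
  exists ys, (forall y, In y ys -> P y) /\ forall x, In x xs -> exists y, In y ys /\ Q x y.
Proof.
  induction xs as [|x xs IH]; intros Hxs.
  - exists []. split; intros ? [].
  - destruct IH as [ys [H1 H2]]; [intros x' Hx'; apply Hxs; right; exact Hx'|].
    destruct (Hxs x (or_introl eq_refl)) as [y [Py Qy]].
    exists (y :: ys). split; [intros y' [<- | Hy']; auto|].
    intros x' [<- | Hx']; [exists y; simpl; auto|].
    destruct (H2 x' Hx') as [y' [Iy' Qy']]. exists y'. simpl. auto.
Qed.

Lemma gen_list_finite_support (G : group) (Y : G -> Prop) (fl : list G) :
  (forall f, In f fl -> gen Y f) ->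
  exists ys, (forall y, In y ys -> Y y) /\ forall f, In f fl -> gen_list ys f.
Proof.
  induction fl as [|f fl IH]; intros Hfl.
  - exists []. split; intros ? [].
  - destruct IH as [ys [H1 H2]]; [intros f' Hf'; apply Hfl; right; exact Hf'|].
    destruct (proj1 (gen_word G Y f) (Hfl f (or_introl eq_refl))) as [w [Hw Ew]].
    exists (map fst w ++ ys). split.
    + intros y [Hy|Hy]%in_app_or; [|auto].
      apply in_map_iff in Hy as [p [<- Hp]]. apply Hw, Hp.
    + assert (Hmono : subset (gen_list ys) (gen_list (map fst w ++ ys)))
        by (apply gen_mono; intros y Hy; apply in_or_app; right; exact Hy).
      intros f' [<- | Hf']; [|apply Hmono, H2, Hf'].
      apply gen_word. exists w. split; [|exact Ew].
      intros p Hp. apply in_or_app. left. apply in_map, Hp.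
Qed.

Lemma gen_union_cyclic (G : group) (X Z : G -> Prop) (c : G) :
  (forall x, Z x <-> exists z, x = zpow c z) ->
  forall x, gen (fun y => X y \/ Z y) x <-> gen (fun y => X y \/ y = c) x.
Proof.
  intros Hc x. assert (Zc : Z c) by (apply Hc; exists 1%Z; symmetry; apply gmul1r).
  split; apply gen_min; try apply gen_subgroup.
  - intros y [Xy|[z ->]%Hc]; [apply gen_incl; left; exact Xy|].
    apply subgroup_zpow; [apply gen_subgroup|]. apply gen_incl. right. reflexivity.
  - intros y [Xy| ->]; apply gen_incl; [left|right]; assumption.
Qed.

Section Complex.
Variables (k : nat) (G : group) (L : complex) (C : vert L -> G -> Prop) (r : nat)
  (W : (vert L -> Prop) -> Prop).
Hypotheses (kf : k_free G k) (lab : labeling C) (Hrk : r < k)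
  (sat : saturated W) (IR : forall s, W s -> IR_eq C s r).

Definition admissible (gl : list G) : Prop :=
  length gl <= r /\ subset (gen_list gl) (Theta_sat C W).

Definition covers (gl : list G) (s : vert L -> Prop) : Prop :=
  subset (Theta_simplex C s) (gen_list gl).

Lemma vertex_group_in_Theta_sat s v x : W s -> s v -> C v x -> Theta_sat C W x.
Proof. intros Ws sv Cx. apply gen_incl. exists s, v. auto. Qed.

Lemma admissible_start s : W s -> exists gl, admissible gl /\ covers gl s.
Proof.
  intros Ws. destruct (simp_ne L s (proj1 sat s Ws)) as [v0 Hv0].
  destruct (proj1 (IR s Ws) s (conj (ex_intro _ v0 Hv0) (fun v Hv => Hv))) as [gl [Hl E]].
  exists gl. split; [split; [exact Hl|]|intros x; apply E].
  intros x Hx. apply E in Hx. revert Hx. apply gen_mono. intros y [v [Hv Cy]].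
  exists s, v. auto.
Qed.

Lemma admissible_add_vertex tau rho v gl :
  W tau -> face rho tau -> rank_eq (Theta_simplex C rho) r -> tau v ->
  admissible gl -> covers gl rho ->
  exists gl', admissible gl' /\ subset (gen_list gl) (gen_list gl') /\
    forall x, C v x -> gen_list gl' x.
Proof.
  intros Wt [Hne Hrt] Hrr tv [Hgl Hsub] HR.
  destruct (proj1 (lab v)) as [c Hc].
  assert (HP : rank_le (gen (fun y => Theta_simplex C rho y \/ y = c)) r).
  { apply (rank_le_ext G (Theta_simplex C (fun u => rho u \/ u = v))).
    - intros x. unfold Theta_simplex at 2.
      rewrite (gen_union_gen G _ (fun y => exists u, rho u /\ C u y)) by reflexivity.
      rewrite <- (gen_union_cyclic G _ (C v) c Hc). apply gen_ext. intros y. split.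
      + intros [u [[Hu | ->] Cy]]; [left; exists u|right]; auto.
      + intros [[u [Hu Cy]]|Cy]; [exists u|exists v]; auto.
    - apply (proj1 (IR tau Wt)). destruct Hne as [v0 Hv0].
      split; [exists v0; left; exact Hv0|]. intros u [Hu| ->]; auto. }
  destruct (rank_le_adjoin G k r c gl _ kf Hrk Hgl HR Hrr HP) as [gl' [Hl' E']].
  assert (Hcgl : subset (gen_list (c :: gl)) (gen_list gl')) by (intros x; apply E').
  exists gl'. split; [split; [exact Hl'|]|split].
  - intros x Hx. apply E' in Hx. revert Hx. apply gen_min; [apply gen_subgroup|].
    intros y [<- | Hy]; [|apply Hsub, gen_incl, Hy].
    apply (vertex_group_in_Theta_sat tau v); [exact Wt|exact tv|apply Hc; exists 1%Z].
    symmetry. apply gmul1r.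
  - intros x Hx. apply Hcgl. revert Hx. apply gen_mono. intros y Hy. right. exact Hy.
  - intros x [z ->]%Hc. apply Hcgl, subgroup_zpow; [apply gen_subgroup|].
    apply gen_incl. left. reflexivity.
Qed.

Lemma admissible_add_vertices tau rho vl gl :
  W tau -> face rho tau -> rank_eq (Theta_simplex C rho) r -> (forall v, In v vl -> tau v) ->
  admissible gl -> covers gl rho ->
  exists gl', admissible gl' /\ subset (gen_list gl) (gen_list gl') /\
    forall v x, In v vl -> C v x -> gen_list gl' x.
Proof.
  intros Wt Hf Hrr. revert gl. induction vl as [|v vl IH]; intros gl Hvl Agl HR.
  - exists gl. split; [exact Agl|split; [intros x Hx; exact Hx|intros v x []]].
  - destruct (admissible_add_vertex tau rho v gl Wt Hf Hrr (Hvl v (or_introl eq_refl)) Agl HR)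
      as [gl1 [A1 [I1 C1]]].
    destruct (IH gl1 (fun u Hu => Hvl u (or_intror Hu)) A1) as [gl2 [A2 [I2 C2]]].
    { intros x Hx. apply I1, HR, Hx. }
    exists gl2. split; [exact A2|split; [intros x Hx; apply I2, I1, Hx|]].
    intros u x [<- | Hu] Cx; [apply I2, C1, Cx|exact (C2 u x Hu Cx)].
Qed.

Lemma admissible_adj a b gl : sat_adj W a b -> admissible gl -> covers gl a ->
  exists gl', admissible gl' /\ subset (gen_list gl) (gen_list gl') /\ covers gl' b.
Proof.
  intros [Wa [Wb [Hab | Hba]]] Agl Ha.
  - destruct (proj2 (IR a Wa)) as [rho [[Hne Hra] Hrr]].
    destruct (simp_fin L b (proj1 sat b Wb)) as [vl Hvl].
    destruct (admissible_add_vertices b rho vl gl Wb) as [gl' [A' [I' C']]]; auto.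
    + split; [exact Hne|]. intros u Hu. apply (proj2 Hab), Hra, Hu.
    + intros v Hv. apply Hvl, Hv.
    + intros x Hx. apply Ha. revert Hx. apply gen_mono. intros y [u [Hu Cy]].
      exists u. auto.
    + exists gl'. split; [exact A'|split; [exact I'|]].
      apply gen_min; [apply gen_subgroup|]. intros y [u [Hu Cy]].
      apply (C' u); [apply Hvl, Hu|exact Cy].
  - exists gl. split; [exact Agl|split; [intros x Hx; exact Hx|]].
    intros x Hx. apply Ha. revert Hx. apply gen_mono. intros y [u [Hu Cy]].
    exists u. split; [apply (proj2 Hba), Hu|exact Cy].
Qed.

Lemma admissible_path a b : clos_refl_trans _ (sat_adj W) a b ->
  forall gl, admissible gl -> covers gl a ->
  exists gl', admissible gl' /\ subset (gen_list gl) (gen_list gl') /\ covers gl' b.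
Proof.
  induction 1 as [a b Hab|a|a b c _ IH1 _ IH2]; intros gl Agl Ha.
  - exact (admissible_adj a b gl Hab Agl Ha).
  - exists gl. split; [exact Agl|split; [intros x Hx; exact Hx|exact Ha]].
  - destruct (IH1 gl Agl Ha) as [gl1 [A1 [I1 T1]]].
    destruct (IH2 gl1 A1 T1) as [gl2 [A2 [I2 T2]]].
    exists gl2. split; [exact A2|split; [intros x Hx; apply I2, I1, Hx|exact T2]].
Qed.

Hypothesis conn : sat_connected W.

Lemma admissible_cover s0 sl : W s0 -> (forall s, In s sl -> W s) ->
  exists gl, admissible gl /\ forall s, In s (s0 :: sl) -> covers gl s.
Proof.
  intros W0. induction sl as [|s sl IH]; intros Hsl.
  - destruct (admissible_start s0 W0) as [gl [Agl Hc]].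
    exists gl. split; [exact Agl|]. intros s [<- | []]. exact Hc.
  - destruct IH as [gl [Agl Hs]]; [intros s' Hs'; apply Hsl; right; exact Hs'|].
    destruct (admissible_path s0 s (conn s0 s W0 (Hsl s (or_introl eq_refl))) gl Agl
                (Hs s0 (or_introl eq_refl))) as [gl' [A' [I' T']]].
    exists gl'. split; [exact A'|].
    intros s' [<- | [<- | Hs']]; [| exact T' |]; intros x Hx; apply I'.
    + apply (Hs s0); [left; reflexivity|exact Hx].
    + apply (Hs s'); [right; exact Hs'|exact Hx].
Qed.

Lemma local_rank_le_Theta_sat : local_rank_le (Theta_sat C W) r.
Proof.
  intros F [m [fl [_ EF]]] HF.
  destruct (gen_list_finite_support G (fun x => exists s v, W s /\ s v /\ C v x) fl)
    as [ys [Hys Hfl]].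
  { intros f Hf. apply HF, EF, gen_incl, Hf. }
  destruct (list_choice W (fun y s => exists v, s v /\ C v y) ys) as [[|s0 sl] [Hsl Hys']].
  { intros y Hy. destruct (Hys y Hy) as [s [v [Ws [sv Cy]]]]. exists s. eauto. }
  - exists (gen_list []). split; [exists []; split; [simpl; lia|reflexivity]|split].
    + apply gen_min; [apply gen_subgroup|]. intros x [].
    + intros x Hx. apply EF in Hx. revert Hx. apply gen_min; [apply gen_subgroup|].
      intros f Hf. generalize (Hfl f Hf). apply gen_mono.
      intros y Hy. destruct (Hys' y Hy) as [s [[] _]].
  - destruct (admissible_cover s0 sl) as [gl [[Hl Hsub] Hcov]];
      [apply Hsl; left; reflexivity|intros s Hs; apply Hsl; right; exact Hs|].
    exists (gen_list gl). split; [exists gl; split; [exact Hl|reflexivity]|split; [exact Hsub|]].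
    intros x Hx. apply EF in Hx. revert Hx. apply gen_min; [apply gen_subgroup|].
    intros f Hf. generalize (Hfl f Hf). apply gen_min; [apply gen_subgroup|].
    intros y Hy. destruct (Hys' y Hy) as [s [Is [v [sv Cy]]]].
    apply (Hcov s Is), gen_incl. exists v. auto.
Qed.

End Complex.

Theorem lemma4p2 (k : nat) (G : group) (L : complex)
  (C : vert L -> G -> Prop) (r : nat)
  (W : (vert L -> Prop) -> Prop) :
  0 < k ->
  k_free G k ->
  (forall g : G, g <> gone G -> is_infinite_cyclic (centralizer g)) ->
  labeling C ->
  0 < r -> r <= k - 1 ->
  saturated W -> sat_connected W ->
  (forall s, W s -> IR_eq C s r) ->
  local_rank_le (Theta_sat C W) r.
Proof.
  intros Hk kf _ lab _ Hrk sat conn IR.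
  apply (local_rank_le_Theta_sat k); auto. lia.
Qed.
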